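(* Fix $x\in\mathbb X$, $\Lambda\Subset\mathbb X\setminus\{x\}$ and a total order $\preceq$ on $\mathbf F(x)$. Let $X\in\mathbf F(x)$ with $Z_X(\Lambda)\neq0$. If $X\neq\{x\}$, then \[ \frac{Z_X(\Lambda\mid x)}{Z_X(\Lambda)}=1+(W(X)-1)\,R_X(X',\Lambda)\,\mathbf 1_{\{X'\subset\Lambda\}}. \] Consequently $\widehat z_X(x,\Lambda)=z(x)\big(1+(W(X)-1)R_X(X',\Lambda)\mathbf 1_{\{X'\subset\Lambda\}}\big)$, and this last identity also holds in the case $X=\{x\}$.
   Context: $\mathbb X$ is a finite or countably infinite set, $X\Subset\mathbb X$ means finite subset, $\mathbf F$ is the set of finite subsets of $\mathbb X$. Fix $z:\mathbb X\to\mathbb C$, $W:\mathbf F\to\mathbb C$; $f^X=\prod_{y\in X}f(y)$, $W(x)=W(\{x\})$; singletons $\{x\}$ are written $x$ inside arguments. For an interaction $V:\mathbf F\to\mathbb C$, the conditional interaction is $V(X\mid B)=\prod_{C\subset B}V(X\cup C)$ if $X\cap B=\varnothing$, $V(X\mid B)=0$ if $X=\{y\}$ with $y\in B$, and $V(X\mid B)=1$ otherwise; the Boltzmann factor is $\kappa(X\mid B)=\prod_{\varnothing\neq S\subset X}V(S\mid B)$; partition functions are $Z(X,\Lambda\mid B)=\sum_{Y\subset\Lambda\setminus X}z^{X\cup Y}\kappa(X\cup Y\mid B)$, $Z(\Lambda\mid B)=Z(\varnothing,\Lambda\mid B)$, with $B$ omitted when $B=\varnothing$; correlations $R(X,\Lambda\mid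 B)=Z(X,\Lambda\mid B)/Z(\Lambda\mid B)$ when the denominator is nonzero (so $R(\varnothing,\Lambda)=1$), and effective activities $\widehat z(y,\Lambda\mid B)=R(\{y\},\Lambda\mid B)$ for $y\notin\Lambda$. Let $\mathbf F(x)=\{X\Subset\mathbb X\mid x\in X\}$ and $X'=X\setminus\{x\}$. Given the total order $\preceq$ on $\mathbf F(x)$ (strict part $\prec$) and $X\in\mathbf F(x)$, define $W_X:\mathbf F\to\mathbb C$ by $W_X(Y)=W(Y)W(\{x\}\cup Y)$ if $x\notin Y$ and $\{x\}\cup Y\prec X$; $W_X(Y)=1$ if $x\in Y$ and $Y\neq X$; $W_X(Y)=W(Y)$ otherwise. Quantities built from $V=W_X$ are written $\kappa_X,Z_X,R_X,\widehat z_X$. *)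

From HB Require Import structures.
From mathcomp Require Import all_boot all_order all_algebra.
From mathcomp Require Import finmap.
From mathcomp Require Import complex.
From mathcomp Require Import reals.
Set Implicit Arguments. Unset Strict Implicit. Unset Printing Implicit Defensive.
Import Order.TTheory GRing.Theory Num.Theory.
Local Open Scope ring_scope.
Local Open Scope fset_scope.

Section Defs.
(* The countable (finite or countably infinite) site set 𝕏 is a countType T;
   finite subsets X ⋐ 𝕏 are elements of {fset T}. C is any field
   (instantiated with complex numbers in the statement). *)
Variables (T : countType) (C : fieldType).

Definition fpow (f : T -> C) (X : {fset T}) : C := \prod_(y <- X) f y.

Definition cond_int (V : {fset T} -> C) (X B : {fset T}) : C :=
  if X `&` B == fset0 then \prod_(D <- fpowerset B) V (X `|` D)
  else if (#|` X| == 1)%N && (X `<=` B) then 0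
  else 1.

Definition kappa (V : {fset T} -> C) (X B : {fset T}) : C :=
  \prod_(S <- fpowerset X | S != fset0) cond_int V S B.

Definition Zpart (z : T -> C) (V : {fset T} -> C) (X L B : {fset T}) : C :=
  \sum_(Y <- fpowerset (L `\` X)) fpow z (X `|` Y) * kappa V (X `|` Y) B.

Definition Z0 (z : T -> C) (V : {fset T} -> C) (L B : {fset T}) : C :=
  Zpart z V fset0 L B.

(* correlations R(X, Lambda | B) (only used where the denominator is nonzero) *)
Definition Rcorr (z : T -> C) (V : {fset T} -> C) (X L B : {fset T}) : C :=
  Zpart z V X L B / Z0 z V L B.

Definition zhat (z : T -> C) (V : {fset T} -> C) (y : T) (L B : {fset T}) : C :=
  Rcorr z V [fset y] L B.

Definition strict (le : {fset T} -> {fset T} -> bool) (A B : {fset T}) : bool :=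
  le A B && (A != B).

Definition WX (W : {fset T} -> C) (le : {fset T} -> {fset T} -> bool)
    (x : T) (X : {fset T}) (Y : {fset T}) : C :=
  if (x \notin Y) && strict le (x |` Y) X then W Y * W (x |` Y)
  else if (x \in Y) && (Y != X) then 1
  else W Y.

Definition total_order_on_Fx (le : {fset T} -> {fset T} -> bool) (x : T) : Prop :=
  [/\ (forall A, x \in A -> le A A),
      (forall A B, x \in A -> x \in B -> le A B -> le B A -> A = B),
      (forall A B D, x \in A -> x \in B -> x \in D -> le A B -> le B D -> le A D)
    & (forall A B, x \in A -> x \in B -> le A B || le B A)].
End Defs.

(* For Y ⊂ Λ (so x ∉ Y) and S ⊂ Y, the interaction W_X is 1 on every set {x} ∪ S
   except X itself, where it is W(X).  Hence κ_X({x} ∪ Y) and, when X ≠ {x}, also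
   κ_X(Y | x) equal κ_X(Y) times W(X) if X' ⊂ Y and times 1 otherwise; for the
   conditional factor only nonempty S contribute, which is why X = {x} is excluded
   there.  Summing z^Y κ_X(Y) against this weight gives
   Z_X(Λ) + (W(X) - 1) Σ_{X' ⊂ Y ⊂ Λ} z^Y κ_X(Y), and the last sum is Z_X(X', Λ)
   when X' ⊂ Λ and empty otherwise. *)

From HB Require Import structures.
From mathcomp Require Import all_boot all_order all_algebra.
From mathcomp Require Import finmap complex reals ring.
Import Order.TTheory GRing.Theory Num.Theory.
Local Open Scope fset_scope.
Local Open Scope ring_scope.
Set Implicit Arguments.
Unset Strict Implicit.

Section BigFpowerset.
Variables (R : Type) (idx : R) (op : Monoid.com_law idx) (K : choiceType).

Lemma big_seq_if_eq (I : eqType) (s : seq I) (c : I) (b : R) : uniq s ->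
  \big[op/idx]_(S <- s) (if S == c then b else idx) = if c \in s then b else idx.
Proof.
move=> s_uniq; case: ifP => cs.
  rewrite (bigD1_seq c) //= eqxx big1 ?Monoid.mulm1 // => S /negbTE -> //.
by rewrite big1_seq // => S /andP [_ Ss]; case: eqP Ss => // ->; rewrite cs.
Qed.

Lemma big_fpowersetU1 (P : pred {fset K}) (F : {fset K} -> R) x Y : x \notin Y ->
  \big[op/idx]_(S <- fpowerset (x |` Y) | P S) F S =
  op (\big[op/idx]_(S <- fpowerset Y | P S) F S)
     (\big[op/idx]_(S <- fpowerset Y | P (x |` S)) F (x |` S)).
Proof.
move=> xY; have xNsub S : S \in fpowerset Y -> x \notin S.
  by rewrite fpowersetE => /fsubsetP SY; apply: contra xY => /SY.
rewrite -(big_map (fsetU [fset x]) P F) -big_cat.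
apply/perm_big/uniq_perm; first exact: fset_uniq.
- rewrite cat_uniq fset_uniq map_inj_in_uniq ?fset_uniq ?andbT.
    by apply/hasPn => _ /mapP [S _ ->]; apply: contraL (fset1U1 x S) => /xNsub.
  by move=> A B /xNsub xA /xNsub xB eAB; rewrite -(fsetU1K xA) -(fsetU1K xB) eAB.
move=> S; rewrite mem_cat fpowersetE -fsubDset; apply/idP/orP.
  case: (boolP (x \in S)) => xS; last by rewrite mem_fsetD1 // fpowersetE; left.
  by right; apply/mapP; exists (S `\ x); rewrite ?fpowersetE ?fsetD1K.
case=> [|/mapP [S' + ->]]; rewrite fpowersetE => SY.
  exact: fsubset_trans (fsubD1set _ _) SY.
by rewrite fsubDset fsetUS.
Qed.

Lemma big_fpowerset_supset (F : {fset K} -> R) A L : A `<=` L ->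
  \big[op/idx]_(Y <- fpowerset (L `\` A)) F (A `|` Y) =
  \big[op/idx]_(Y <- fpowerset L | A `<=` Y) F Y.
Proof.
move=> AL; rewrite -[RHS]big_filter -(big_map (fsetU A) xpredT).
have fsetUK B : B \in fpowerset (L `\` A) -> (A `|` B) `\` A = B.
  by rewrite fpowersetCE => /andP [_ /fsetDidPl BA]; rewrite fsetDUl fsetDv fset0U BA.
apply/perm_big/uniq_perm; rewrite ?filter_uniq ?fset_uniq //.
  by rewrite map_inj_in_uniq ?fset_uniq // => B D /fsetUK {2}<- /fsetUK {2}<- ->.
move=> S; rewrite mem_filter fpowersetE andbC; apply/mapP/andP => [[B + ->]|[AS SL]].
  by rewrite fpowersetCE fsubsetUl fsubUset AL => /andP [].
exists (S `\` A); first by rewrite fpowersetE fsetSD.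
by rewrite fsetUDl fsetDv fsetD0; apply/esym/fsetUidPr.
Qed.
End BigFpowerset.

Lemma sumr_mul_if1 (R : pzRingType) (I : Type) (s : seq I) (c : pred I)
    (f : I -> R) (a : R) :
  \sum_(i <- s) f i * (if c i then a else 1) =
  \sum_(i <- s) f i + (\sum_(i <- s | c i) f i) * (a - 1).
Proof.
rewrite [X in _ = _ + X * _]big_mkcond /= mulr_suml -big_split /=; apply: eq_bigr => i _.
by case: (c i); rewrite ?mul0r ?addr0 ?mulr1 // mulrBr mulr1 addrC subrK.
Qed.

Lemma divrDl_if (F : fieldType) (Z c P : F) (b : bool) : Z != 0 ->
  (Z + c * (if b then P else 0)) / Z = 1 + c * (P / Z) * (if b then 1 else 0).
Proof. by move=> Z_neq0; case: b; field. Qed.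

Section PartitionFunctions.
Variables (T : countType) (C : fieldType) (z : T -> C) (V : {fset T} -> C).

Lemma cond_int0 S : cond_int V S fset0 = V S.
Proof. by rewrite /cond_int fsetI0 eqxx fpowerset0 big_seq_fset1 fsetU0. Qed.

Lemma kappa0E Y : kappa V Y fset0 = \prod_(S <- fpowerset Y | S != fset0) V S.
Proof. by apply: eq_bigr => S _; rewrite cond_int0. Qed.

Lemma kappa_cond1 x Y : x \notin Y ->
  kappa V Y [fset x] =
  kappa V Y fset0 * \prod_(S <- fpowerset Y | S != fset0) V (x |` S).
Proof.
move=> xY; rewrite kappa0E -big_split /= /kappa; apply: eq_fbigr => S.
rewrite fpowersetE => /fsubsetP SY _; have xS : x \notin S by apply: contra xY => /SY.
rewrite /cond_int fsetI_eq0 fdisjointX1 xS -[X in fpowerset X](fsetU0 [fset x]).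
by rewrite big_fpowersetU1 // fpowerset0 !big_seq_fset1 !fsetU0 fsetUC.
Qed.

Lemma kappa_fsetU1 x Y : x \notin Y ->
  kappa V (x |` Y) fset0 = kappa V Y fset0 * \prod_(S <- fpowerset Y) V (x |` S).
Proof.
move=> xY; rewrite !kappa0E big_fpowersetU1 //; congr (_ * _).
by apply: eq_bigl => S; apply/fset0Pn; exists x; rewrite fset1U1.
Qed.

Lemma Z0E L B : Z0 z V L B = \sum_(Y <- fpowerset L) fpow z Y * kappa V Y B.
Proof. by rewrite /Z0 /Zpart fsetD0; apply: eq_bigr => Y _; rewrite fset0U. Qed.

Lemma Zpart_fset1 x L : x \notin L ->
  Zpart z V [fset x] L fset0 =
  z x * \sum_(Y <- fpowerset L) fpow z Y * kappa V (x |` Y) fset0.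
Proof.
move=> xL; rewrite /Zpart mem_fsetD1 // mulr_sumr; apply: eq_big_seq => Y.
rewrite fpowersetE => /fsubsetP YL; have xY : x \notin Y by apply: contra xL => /YL.
by rewrite /fpow big_fsetU1 // mulrA.
Qed.

Lemma sum_supset_Zpart A L :
  \sum_(Y <- fpowerset L | A `<=` Y) fpow z Y * kappa V Y fset0 =
  if A `<=` L then Zpart z V A L fset0 else 0.
Proof.
case: ifP => AL.
  by rewrite /Zpart (big_fpowerset_supset _ (fun Y => fpow z Y * kappa V Y fset0)).
rewrite big1_seq // => Y /andP [AY]; rewrite fpowersetE => YL.
by rewrite (fsubset_trans AY YL) in AL.
Qed.

Lemma Z0_reweight A L a :
  \sum_(Y <- fpowerset L) fpow z Y * kappa V Y fset0 * (if A `<=` Y then a else 1) =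
  Z0 z V L fset0 + (a - 1) * (if A `<=` L then Zpart z V A L fset0 else 0).
Proof. by rewrite sumr_mul_if1 sum_supset_Zpart Z0E mulrC. Qed.

End PartitionFunctions.

Section InteractionWX.
Variables (T : countType) (C : fieldType) (W : {fset T} -> C).
Variables (le : {fset T} -> {fset T} -> bool) (x : T) (X : {fset T}).
Hypothesis xX : x \in X.
Local Notation V := (WX W le x X).

Lemma WX_fsetU1 (S : {fset T}) : x \notin S ->
  V (x |` S) = if S == X `\ x then W X else 1.
Proof.
move=> xS; rewrite /WX fset1U1 /=.
have -> : (x |` S == X) = (S == X `\ x).
  by apply/eqP/eqP => [<-|->]; rewrite ?fsetU1K ?fsetD1K.
by case: eqP => [->|]; rewrite ?fsetD1K.
Qed.

Lemma prod_WX_fsetU1 (P : pred {fset T}) Y : x \notin Y ->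
  \prod_(S <- fpowerset Y | P S) V (x |` S) =
  if (X `\ x `<=` Y) && P (X `\ x) then W X else 1.
Proof.
move=> xY; rewrite big_mkcond /= (eq_big_seq (fun S => if S == X `\ x then
  (if P (X `\ x) then W X else 1) else 1)); last first.
  move=> S; rewrite fpowersetE => /fsubsetP SY.
  have xS : x \notin S by apply: contra xY => /SY.
  by rewrite WX_fsetU1 //; case: eqP => [->|_]; case: (P _).
by rewrite big_seq_if_eq ?fset_uniq // fpowersetE; case: (_ `<=` _); case: (P _).
Qed.

Lemma kappaWX_cond1 Y : X != [fset x] -> x \notin Y ->
  kappa V Y [fset x] = kappa V Y fset0 * (if X `\ x `<=` Y then W X else 1).
Proof.
move=> Xneq1 xY; rewrite kappa_cond1 // prod_WX_fsetU1 //.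
suff -> : X `\ x != fset0 by rewrite andbT.
by apply: contra Xneq1 => /eqP X'0; rewrite -(fsetD1K xX) X'0 fsetU0.
Qed.

Lemma kappaWX_fsetU1 Y : x \notin Y ->
  kappa V (x |` Y) fset0 = kappa V Y fset0 * (if X `\ x `<=` Y then W X else 1).
Proof.
by move=> xY; rewrite kappa_fsetU1 // (prod_WX_fsetU1 xpredT) // andbT.
Qed.

Variables (z : T -> C) (L : {fset T}).
Hypothesis xL : x \notin L.

Lemma Z0_WX_cond1 : X != [fset x] ->
  Z0 z V L [fset x] =
  Z0 z V L fset0 + (W X - 1) * (if X `\ x `<=` L then Zpart z V (X `\ x) L fset0 else 0).
Proof.
move=> Xneq1; rewrite Z0E -Z0_reweight; apply: eq_big_seq => Y.
rewrite fpowersetE => /fsubsetP YL.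
by rewrite kappaWX_cond1 ?mulrA //; apply: contra xL => /YL.
Qed.

Lemma Zpart_WX_fset1 :
  Zpart z V [fset x] L fset0 =
  z x * (Z0 z V L fset0 +
         (W X - 1) * (if X `\ x `<=` L then Zpart z V (X `\ x) L fset0 else 0)).
Proof.
rewrite Zpart_fset1 // -Z0_reweight; congr (_ * _); apply: eq_big_seq => Y.
rewrite fpowersetE => /fsubsetP YL.
by rewrite kappaWX_fsetU1 ?mulrA //; apply: contra xL => /YL.
Qed.

End InteractionWX.

Theorem lemma4p2 (R : realType) (T : countType)
    (z : T -> R[i]) (W : {fset T} -> R[i])
    (le : {fset T} -> {fset T} -> bool) (x : T) (L X : {fset T}) :
  total_order_on_Fx le x ->
  x \notin L ->
  x \in X ->
  Z0 z (WX W le x X) L fset0%fset != 0 ->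
  (X != [fset x]%fset ->
     Z0 z (WX W le x X) L [fset x]%fset / Z0 z (WX W le x X) L fset0%fset =
     1 + (W X - 1) * Rcorr z (WX W le x X) (X `\ x)%fset L fset0%fset
           * (if (X `\ x `<=` L)%fset then 1 else 0)) /\
  zhat z (WX W le x X) x L fset0%fset =
     z x * (1 + (W X - 1) * Rcorr z (WX W le x X) (X `\ x)%fset L fset0%fset
                 * (if (X `\ x `<=` L)%fset then 1 else 0)).
Proof.
(* The order only affects W_X on sets avoiding x, which enter numerator and
   denominator alike. *)
move=> _ xL xX Z0_neq0; split=> [Xneq1|].
  by rewrite Z0_WX_cond1 // divrDl_if.
by rewrite /zhat /Rcorr Zpart_WX_fset1 // -mulrA divrDl_if.
Qed.
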